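(* Let $C>0$ be a constant. There is a constant $C'>0$, depending only on $C$, such that the following holds. Let $n\ge 1$, let $P\in\mathbb{R}^{n\times n}$ be a matrix with non-negative entries, and let $w,v\in\mathbb{R}^n$ satisfy $\|w\|_\infty\le C n^{-1/2}$ and $\|v\|_\infty\le C n^{-1/2}$. Define $$L(w,v)=\langle w,Pv\rangle-\sum_{i=1}^n\log\Big(\sum_{j=1}^n\exp(w_iv_j)\Big).$$ Then $$\left| L(w,v)-\left(\langle w,Pv\rangle-\frac1n\Big(\sum_{i=1}^n w_i\Big)\Big(\sum_{j=1}^n v_j\Big)-\frac1n\sum_{i,j=1}^n\frac{w_i^2v_j^2}{2}-n\log n\right)\right|\le \frac{C'}{n}.$$
   Context: $\langle\cdot,\cdot\rangle$ is the standard inner product on $\mathbb{R}^n$ and $\|\cdot\|_\infty$ the maximum norm. The paper states the hypothesis as $\|v\|_\infty,\|w\|_\infty\lesssim n^{-1/2}$ and the conclusion with an error term $\mathcal{O}(n^{-1})$, where $\lesssim$ and $\mathcal{O}$ hide constants depending only on the implicit constant in the hypothesis. *)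

From HB Require Import structures.
From mathcomp Require Import all_boot all_order all_algebra.
From mathcomp Require Import all_classical all_reals all_analysis.
Set Implicit Arguments. Unset Strict Implicit. Unset Printing Implicit Defensive.
Import Order.TTheory GRing.Theory Num.Theory.
Local Open Scope ring_scope.

Definition inner_Pv (R : realType) (n : nat) (P : 'M[R]_n) (w v : 'I_n -> R) : R :=
  \sum_(i < n) w i * (\sum_(j < n) P i j * v j).

Definition Lwv (R : realType) (n : nat) (P : 'M[R]_n) (w v : 'I_n -> R) : R :=
  inner_Pv P w v - \sum_(i < n) ln (\sum_(j < n) expR (w i * v j)).

Definition Lapprox (R : realType) (n : nat) (P : 'M[R]_n) (w v : 'I_n -> R) : R :=
  inner_Pv P w v
  - n%:R^-1 * (\sum_(i < n) w i) * (\sum_(j < n) v j)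
  - n%:R^-1 * (\sum_(i < n) \sum_(j < n) (w i ^+ 2 * v j ^+ 2) / 2)
  - n%:R * ln n%:R.

From HB Require Import structures.
From mathcomp Require Import all_boot all_order all_algebra.
From mathcomp Require Import all_classical all_reals all_analysis.
From mathcomp Require Import ring lra.
Set Implicit Arguments.
Unset Strict Implicit.
Unset Printing Implicit Defensive.
Import Order.TTheory GRing.Theory Num.Theory.
Local Open Scope ring_scope.

(* With x_ij = w_i v_j = O(1/n), each row term is a log-mean-exp:
   ln (\sum_j e^(x_ij)) = ln n + ln y_i with y_i = 1 + (\sum_j x_ij)/n + O(1/n^2),
   and ln y_i = y_i - 1 + O((y_i - 1)^2) with y_i - 1 = O(1/n).  Summing the n
   rows costs O(1/n); the quadratic term of the approximation is itself O(1/n).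
   The inner product <w, Pv> cancels identically. *)

Section LogExpEstimates.
Variable R : realType.

Lemma ln_le_subr1 (y : R) : 0 < y -> ln y <= y - 1.
Proof. by move=> y0; have := expR_ge1Dx (ln y); rewrite lnK ?posrE //; lra. Qed.

(* [ln y] lies between [1 - 1/y] and [y - 1], whose gap is [(y - 1)^2 / y]. *)
Lemma norm_ln_sub_subr1 (y : R) : 0 < y -> `|ln y - (y - 1)| <= (y - 1) ^+ 2 / y.
Proof.
move=> y0; have := ln_le_subr1 y0.
have := @ln_le_subr1 y^-1; rewrite invr_gt0 lnV ?posrE // => /(_ y0) lnV_le ln_le.
have -> : (y - 1) ^+ 2 / y = (y - 1) - (1 - y^-1).
  by field; rewrite gt_eqF.
by rewrite ler_norml; apply/andP; split; lra.
Qed.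

Lemma expR_sub1_sub_bounds (b x : R) : `|x| <= b ->
  0 <= expR x - 1 - x <= expR b * x ^+ 2.
Proof.
move=> xb; have := expR_ge1Dx x; have := expR_ge1Dx (- x); rewrite expRN.
have ex0 := expR_gt0 x.
have exb : expR x <= expR b by rewrite ler_expR (le_trans (ler_norm x)).
have eb1 : 1 <= expR b by rewrite -expR0 ler_expR (le_trans _ xb).
move=> /(ler_wpM2r (ltW ex0)); rewrite mulVf ?gt_eqF // => lower upper.
apply/andP; split; first lra.
by case: (lerP 0 x) => x0; nra.
Qed.

Lemma norm_sum_le_card (I : finType) (f : I -> R) (b : R) :
  (forall i, `|f i| <= b) -> `|\sum_i f i| <= #|I|%:R * b.
Proof.
move=> fb; apply: le_trans (ler_norm_sum _ _ _) _.
by rewrite mulr_natl -sumr_const; apply: ler_sum => i _; exact: fb.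
Qed.

Lemma ler_sqr_norml (a b : R) : `|a| <= b -> a ^+ 2 <= b ^+ 2.
Proof.
move=> ab; rewrite -real_normK ?num_real // ler_sqr ?nnegrE //.
exact: le_trans (normr_ge0 a) ab.
Qed.

Definition ln_sum_expR_const (D : R) : R :=
  expR D * (D + expR D * D ^+ 2) ^+ 2 + expR D * D ^+ 2.

Lemma ln_sum_expR_const_ge0 (D : R) : 0 <= ln_sum_expR_const D.
Proof.
by rewrite addr_ge0 // mulr_ge0 ?sqr_ge0 // ltW // expR_gt0.
Qed.

Lemma ln_sum_expR_estimate (n : nat) (D : R) (x : 'I_n -> R) :
  (0 < n)%N -> 0 <= D -> (forall j, `|x j| <= D / n%:R) ->
  `|ln (\sum_j expR (x j)) - ln n%:R - (\sum_j x j) / n%:R|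
    <= ln_sum_expR_const D / n%:R ^+ 2.
Proof.
move=> n0 D0 xD; set N : R := n%:R; set M := expR D.
have N1 : 1 <= N by rewrite ler1n.
have N0 : 0 < N by lra.
have xD' j : `|x j| <= D by apply: le_trans (xD j) _; rewrite ler_pdivrMr //; nra.
set r := \sum_j (expR (x j) - 1 - x j).
have r0 : 0 <= r.
  by apply: sumr_ge0 => j _; case/andP: (expR_sub1_sub_bounds (xD j)).
have rM : r <= M * D ^+ 2 / N.
  have := norm_sum_le_card (f := fun j => expR (x j) - 1 - x j) (b := M * (D / N) ^+ 2).
  rewrite card_ord -/N -/r ger0_norm // => rN; apply: le_trans (rN _) _ => [j|].
    case/andP: (expR_sub1_sub_bounds (xD' j)) => e0 eM.
    by rewrite ger0_norm // (le_trans eM) // ler_pM2l ?expR_gt0 // ler_sqr_norml.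
  suff -> : N * (M * (D / N) ^+ 2) = M * D ^+ 2 / N by [].
  by field; rewrite gt_eqF.
have Sx : `|\sum_j x j| <= D.
  have := norm_sum_le_card xD; rewrite card_ord -/N mulrC divfK //; lra.
set y := (\sum_j expR (x j)) / N.
have y1 : y - 1 = (\sum_j x j + r) / N.
  by rewrite /y /r !sumrB sumr_const card_ord -/N; field; rewrite gt_eqF.
have yM : M^-1 <= y.
  have : \sum_(j < n) M^-1 <= \sum_j expR (x j).
    apply: ler_sum => j _; rewrite /M -expRN ler_expR.
    by have := xD' j; rewrite ler_norml => /andP[].
  by rewrite sumr_const card_ord -mulr_natl /y ler_pdivlMr // mulrC.
have y0 : 0 < y by apply: lt_le_trans yM; rewrite invr_gt0 expR_gt0.
have yV : y^-1 <= M by rewrite invf_ple ?posrE ?expR_gt0.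
have y1B : `|y - 1| <= (D + M * D ^+ 2) / N.
  rewrite y1 normrM [`|N^-1|]gtr0_norm ?invr_gt0 // ler_pM2r ?invr_gt0 //.
  apply: le_trans (ler_normD _ _) _; rewrite (ger0_norm r0) lerD //.
  apply: le_trans rM _; rewrite ler_pdivrMr // ler_peMr //.
  by rewrite mulr_ge0 ?sqr_ge0 // ltW // expR_gt0.
have lnE : ln (\sum_j expR (x j)) = ln N + ln y.
  by rewrite -lnM ?posrE // /y mulrCA mulfV ?mulr1 // gt_eqF.
have -> : ln (\sum_j expR (x j)) - ln N - (\sum_j x j) / N = (ln y - (y - 1)) + r / N.
  by rewrite lnE y1; field; rewrite gt_eqF.
have lnB : `|ln y - (y - 1)| <= M * ((D + M * D ^+ 2) / N) ^+ 2.
  apply: le_trans (norm_ln_sub_subr1 y0) _.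
  rewrite mulrC; apply: ler_pM yV (ler_sqr_norml y1B); last exact: sqr_ge0.
  by rewrite invr_ge0 ltW.
have rB : `|r / N| <= M * D ^+ 2 / N ^+ 2.
  have -> : M * D ^+ 2 / N ^+ 2 = M * D ^+ 2 / N / N by field; rewrite gt_eqF.
  by rewrite ger0_norm ?divr_ge0 ?(ltW N0) // ler_pM2r ?invr_gt0.
apply: le_trans (ler_normD _ _) _.
have -> : ln_sum_expR_const D / N ^+ 2
        = M * ((D + M * D ^+ 2) / N) ^+ 2 + M * D ^+ 2 / N ^+ 2.
  by rewrite /ln_sum_expR_const -/M; field; rewrite gt_eqF.
exact: lerD.
Qed.

End LogExpEstimates.

Lemma Lwv_sub_Lapprox (R : realType) (n : nat) (P : 'M[R]_n) (w v : 'I_n -> R) :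
  Lwv P w v - Lapprox P w v =
    n%:R^-1 * (\sum_i \sum_j (w i ^+ 2 * v j ^+ 2) / 2)
    - \sum_i (ln (\sum_j expR (w i * v j)) - ln n%:R - (\sum_j w i * v j) / n%:R).
Proof.
have cross : \sum_i (\sum_j w i * v j) / n%:R
             = n%:R^-1 * (\sum_i w i) * (\sum_j v j).
  under eq_bigr do rewrite -mulr_sumr.
  by rewrite -!mulr_suml mulrC mulrA.
rewrite /Lwv /Lapprox !sumrB cross sumr_const card_ord.
ring.
Qed.

Theorem theorem3p1 (R : realType) (C : R) (hC : 0 < C) :
  exists C' : R, 0 < C' /\
    forall (n : nat) (P : 'M[R]_n) (w v : 'I_n -> R),
      (1 <= n)%N ->
      (forall i j, 0 <= P i j) ->
      (forall i, `|w i| <= C / Num.sqrt n%:R) ->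
      (forall j, `|v j| <= C / Num.sqrt n%:R) ->
      `|Lwv P w v - Lapprox P w v| <= C' / n%:R.
Proof.
set D := C ^+ 2; have D0 : 0 < D by rewrite exprn_gt0.
exists (D ^+ 2 / 2 + ln_sum_expR_const D); split.
  by rewrite ltr_wpDr ?ln_sum_expR_const_ge0 // divr_gt0 ?exprn_gt0.
move=> n P w v n0 _ wC vC; set N : R := n%:R.
have N0 : 0 < N by rewrite ltr0n.
have wvD i j : `|w i * v j| <= D / N.
  rewrite normrM; apply: le_trans (ler_pM _ _ (wC i) (vC j)) _ => //.
  by rewrite -expr2 expr_div_n sqr_sqrtr // ltW.
rewrite Lwv_sub_Lapprox -/N mulrDl.
apply: le_trans (ler_normB _ _) _; apply: lerD.
- rewrite normrM ger0_norm ?invr_ge0 ?(ltW N0) // mulrC ler_pM2r ?invr_gt0 //.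
  have termB i j : `|w i ^+ 2 * v j ^+ 2 / 2| <= (D / N) ^+ 2 / 2.
    by rewrite -exprMn ger0_norm ?divr_ge0 ?sqr_ge0 // ler_pM2r // ler_sqr_norml.
  apply: le_trans (norm_sum_le_card (fun i => norm_sum_le_card (termB i))) _.
  suff -> : #|'I_n|%:R * (#|'I_n|%:R * ((D / N) ^+ 2 / 2)) = D ^+ 2 / 2 by [].
  by rewrite card_ord -/N; field; rewrite gt_eqF.
- have rowB i : `|ln (\sum_j expR (w i * v j)) - ln N - (\sum_j w i * v j) / N|
                 <= ln_sum_expR_const D / N ^+ 2.
    exact: ln_sum_expR_estimate n0 (ltW D0) (wvD i).
  apply: le_trans (norm_sum_le_card rowB) _.
  suff -> : #|'I_n|%:R * (ln_sum_expR_const D / N ^+ 2) = ln_sum_expR_const D / N by [].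
  by rewrite card_ord -/N; field; rewrite gt_eqF.
Qed.
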